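(* Let $\mathcal{X},\mathcal{Y}$ be finite, $P_{\bar X}$ an $m$-type on $\mathcal{X}$, $P_{Y|X}$ a channel, $P_{\bar XY}=P_{\bar X}P_{Y|X}$ with output $P_Y$, and $R>I(P_{\bar X},P_{Y|X})>0$. For a channel $Q_{Y|X}$ write $Q_Y=\sum_xP_{\bar X}(x)Q_{Y|X}(\cdot|x)$ and define \[ \aleph(R,P_{\bar X},P_{Y|X})=\min_{Q_{Y|X}}\Big\{D(P_{\bar X}Q_{Y|X}\|P_{\bar XY})+\tfrac12\big[R-D(P_{\bar X}Q_{Y|X}\|P_{\bar X}Q_Y)\big]_+\Big\}, \] \[ \beth(R,P_{\bar X},P_{Y|X})=\min_{Q_{Y|X}}\Big\{D(P_{\bar X}Q_{Y|X}\|P_{\bar XY})+\big[R-G(Q_{Y|X}\|P_{Y|X}|P_{\bar X})\big]_+\Big\}, \] where, with $(\bar X,\widetilde Y)\sim P_{\bar X}Q_{Y|X}$, \[ G(Q_{Y|X}\|P_{Y|X}|P_{\bar X})=H(Q_Y)-\mathbb{E}\big[\imath_{P_{Y|X}}(\widetilde Y|\bar X)\big]+\min_{R_{Y|X}:\ \sum_xP_{\bar X}(x)R_{Y|X}(\cdot|x)=Q_Y}D(P_{\bar X}R_{Y|X}\|P_{\bar XY}). \] Then $\aleph(R,P_{\bar X},P_{Y|X})\ge\frac12\beth(R,P_{\bar X},P_{Y|X})$.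
   Context: All minima over $Q_{Y|X}$, $R_{Y|X}$ range over channels from $\mathcal{X}$ to $\mathcal{Y}$. $[f]_+=\max\{0,f\}$, $D$ is relative entropy, $H$ is entropy, $\imath_{P_{Y|X}}(y|x)=\log\frac1{P_{Y|X}(y|x)}$. An $m$-type is a distribution with probabilities in $\{0,1/m,\dots,1\}$. *)

From HB Require Import structures.
From mathcomp Require Import all_boot all_order all_algebra.
From mathcomp Require Import all_classical all_reals.
From mathcomp Require Import ereal sequences exp.
Set Implicit Arguments. Unset Strict Implicit. Unset Printing Implicit Defensive.
Import Order.TTheory GRing.Theory Num.Theory.
Local Open Scope ring_scope.
Local Open Scope classical_set_scope.

Section Defs.
Variable R : realType.

Definition is_dist (T : finType) (P : T -> R) : Prop :=
  (forall a, 0 <= P a) /\ \sum_(a : T) P a = 1.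

Definition is_channel (X Y : finType) (W : X -> Y -> R) : Prop :=
  forall x, is_dist (W x).

Definition is_mtype (X : finType) (m : nat) (P : X -> R) : Prop :=
  is_dist P /\ forall x, exists k : nat, (k <= m)%N /\ P x = k%:R / m%:R.

Definition joint (X Y : finType) (P : X -> R) (Q : X -> Y -> R) : X * Y -> R :=
  fun xy => P xy.1 * Q xy.1 xy.2.

Definition outdist (X Y : finType) (P : X -> R) (Q : X -> Y -> R) : Y -> R :=
  fun y => \sum_(x : X) P x * Q x y.

Definition prodd (X Y : finType) (P : X -> R) (Q : Y -> R) : X * Y -> R :=
  fun xy => P xy.1 * Q xy.2.

Definition relent (T : finType) (P Q : T -> R) : \bar R :=
  if [forall a, (0 < P a) ==> (0 < Q a)] then
    (\sum_(a : T) (if 0 < P a then P a * ln (P a / Q a) else 0))%:E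
  else +oo%E.

Definition entropy (T : finType) (P : T -> R) : R :=
  - \sum_(a : T) (if 0 < P a then P a * ln (P a) else 0).

Definition idens (X Y : finType) (W : X -> Y -> R) (x : X) (y : Y) : \bar R :=
  if 0 < W x y then (- ln (W x y))%:E else +oo%E.

Definition expect_idens (X Y : finType) (P : X -> R) (Q W : X -> Y -> R) : \bar R :=
  (\sum_(xy : X * Y | (0 < joint P Q xy)%R)
      (joint P Q xy)%:E * idens W xy.1 xy.2)%E.

Definition posp (f : \bar R) : \bar R := Order.max 0%E f.

Definition mutinf (X Y : finType) (P : X -> R) (W : X -> Y -> R) : \bar R :=
  relent (joint P W) (prodd P (outdist P W)).

Definition Gfun (X Y : finType) (P : X -> R) (Q W : X -> Y -> R) : \bar R :=
  ((entropy (outdist P Q))%:E - expect_idens P Q W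
   + ereal_inf [set relent (joint P V) (joint P W) | V in
                 [set V : X -> Y -> R | is_channel V /\ outdist P V = outdist P Q]])%E.

Definition aleph (X Y : finType) (Rt : R) (P : X -> R) (W : X -> Y -> R) : \bar R :=
  ereal_inf [set (relent (joint P Q) (joint P W)
                  + (2^-1)%:E * posp (Rt%:E - relent (joint P Q) (prodd P (outdist P Q))))%E
            | Q in [set Q : X -> Y -> R | is_channel Q]].

Definition beth (X Y : finType) (Rt : R) (P : X -> R) (W : X -> Y -> R) : \bar R :=
  ereal_inf [set (relent (joint P Q) (joint P W) + posp (Rt%:E - Gfun P Q W))%E
            | Q in [set Q : X -> Y -> R | is_channel Q]].

End Defs.

From HB Require Import structures.
From mathcomp Require Import all_boot all_order all_algebra.
From mathcomp Require Import all_classical all_reals.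
From mathcomp Require Import ereal sequences exp.
From mathcomp Require Import lra.
Import Order.TTheory GRing.Theory Num.Theory.
Set Implicit Arguments. Unset Strict Implicit.
Local Open Scope ring_scope.

(* Fix a channel Q and put D = D(P Q || P W), I = D(P Q || P Q_Y).  When D is
   finite, H(Q_Y) - E[i_W(Y|X)] = I - D, and the minimum inside G is a relative
   entropy, hence nonnegative by Gibbs' inequality; so G >= I - D and
   [R - G]_+ <= D + [R - I]_+.  Thus the objective of beth at Q is at most twice
   that of aleph at Q, and minimizing over Q gives the claim. *)

Section Gibbs.
Variable R : realType.

Lemma sub_le_mul_ln_div (p q : R) : 0 < p -> 0 < q -> p - q <= p * ln (p / q).
Proof.
move=> p_gt0 q_gt0.
have qp_gt0 : 0 < q / p by apply: divr_gt0.
have ln_qp : ln (q / p) <= q / p - 1.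
  by have := @le_ln1Dx R (q / p - 1); rewrite (addrC 1) subrK; apply; lra.
have -> : ln (p / q) = - ln (q / p) by rewrite -[p / q]invf_div lnV ?posrE.
have : p * ln (q / p) <= p * (q / p - 1) by rewrite ler_wpM2l // ltW.
rewrite mulrBr mulr1 mulrCA divff ?mulr1 ?gt_eqF //; lra.
Qed.

Lemma relent_ge0 (T : finType) (p q : T -> R) :
  is_dist p -> (forall a, 0 <= q a) -> \sum_a q a <= 1 -> (0 <= relent p q)%E.
Proof.
move=> [p_ge0 p_sum] q_ge0 q_sum; rewrite /relent.
case: ifP => [/forallP abs_cont | _]; last by rewrite leey.
rewrite lee_fin (@le_trans _ _ (\sum_a (p a - q a))) //.
  by rewrite sumrB p_sum subr_ge0.
apply: ler_sum => a _; case: ifP => [pa_gt0 | /negbT].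
  exact: sub_le_mul_ln_div pa_gt0 (implyP (abs_cont a) pa_gt0).
by rewrite -leNgt subr_le0 => pa_le0; apply: le_trans pa_le0 (q_ge0 a).
Qed.

End Gibbs.

Section JointDistribution.
Variables (R : realType) (X Y : finType) (P : X -> R).
Hypothesis P_dist : is_dist P.

Lemma joint_is_dist (V : X -> Y -> R) : is_channel V -> is_dist (joint P V).
Proof.
case: P_dist => P_ge0 P_sum V_channel; split.
  by case=> x y; rewrite /joint mulr_ge0 //; case: (V_channel x).
rewrite -(pair_bigA _ (fun x y => joint P V (x, y))) /= -[RHS]P_sum.
apply: eq_bigr => x _; rewrite /joint /= -big_distrr /=.
by case: (V_channel x) => _ ->; rewrite mulr1.
Qed.

Variable Q : X -> Y -> R.
Hypothesis Q_channel : is_channel Q.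

Definition mean_ln (V : X -> Y -> R) : R :=
  \sum_(xy : X * Y) joint P Q xy * ln (V xy.1 xy.2).

Lemma joint_ngt0 xy : ~~ (0 < joint P Q xy) -> joint P Q xy = 0.
Proof.
have [J_ge0 _] := joint_is_dist Q_channel.
by rewrite -leNgt => J_le0; apply/le_anti; rewrite J_le0 J_ge0.
Qed.

Lemma joint_gt0 xy : 0 < joint P Q xy -> 0 < P xy.1 /\ 0 < Q xy.1 xy.2.
Proof.
case: xy => x y J_gt0.
have Px_gt0 : 0 < P x.
  rewrite lt_neqAle; case: P_dist => -> _; rewrite andbT.
  by apply: contraTneq J_gt0 => Px0; rewrite /joint /= -Px0 mul0r ltxx.
by move: J_gt0; rewrite /joint /= pmulr_rgt0.
Qed.

Lemma outdist_ge0 y : 0 <= outdist P Q y.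
Proof.
apply: sumr_ge0 => x _; apply: mulr_ge0; first by case: P_dist.
by case: (Q_channel x).
Qed.

Lemma outdist_gt0 xy : 0 < joint P Q xy -> 0 < outdist P Q xy.2.
Proof.
case: xy => x y J_gt0; apply: lt_le_trans J_gt0 _.
rewrite /outdist (bigD1 x) //= lerDl; apply: sumr_ge0 => x' _.
by apply: mulr_ge0; [case: P_dist | case: (Q_channel x')].
Qed.

Lemma relent_joint (V : X -> Y -> R) :
  (forall xy, 0 < joint P Q xy -> 0 < V xy.1 xy.2) ->
  relent (joint P Q) (joint P V) = (mean_ln Q - mean_ln V)%:E.
Proof.
move=> V_supp; rewrite /relent /mean_ln.
have -> : [forall xy, (0 < joint P Q xy) ==> (0 < joint P V xy)].
  apply/forallP => xy; apply/implyP => J_gt0.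
  by rewrite mulr_gt0 ?V_supp //; case: (joint_gt0 J_gt0).
congr EFin; rewrite -sumrB; apply: eq_bigr => xy _.
case: ifP => [J_gt0 | /negbT/joint_ngt0 ->]; last by rewrite !mul0r subrr.
have [Px_gt0 Qxy_gt0] := joint_gt0 J_gt0.
by rewrite -mulrBr /joint -mulf_div divff ?gt_eqF // mul1r ln_div ?posrE ?V_supp.
Qed.

Lemma relent_prodd_outdist :
  relent (joint P Q) (prodd P (outdist P Q))
  = (mean_ln Q - mean_ln (fun _ => outdist P Q))%:E.
Proof. exact: (relent_joint (V := fun _ => outdist P Q) outdist_gt0). Qed.

Lemma entropy_outdist :
  entropy (outdist P Q) = - mean_ln (fun _ => outdist P Q).
Proof.
rewrite /entropy /mean_ln.
rewrite -(pair_bigA _ (fun x y => joint P Q (x, y) * ln (outdist P Q y))) /=.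
rewrite exchange_big /=; congr -%R; apply: eq_bigr => y _.
rewrite -big_distrl /=; case: ifP => // /negbT; rewrite -leNgt => qy_le0.
have qy0 : outdist P Q y = 0 by apply/le_anti; rewrite qy_le0 outdist_ge0.
by rewrite -[\sum_x _]/(outdist P Q y) qy0 mul0r.
Qed.

Lemma expect_idens_mean_ln (W : X -> Y -> R) :
  (forall xy, 0 < joint P Q xy -> 0 < W xy.1 xy.2) ->
  expect_idens P Q W = (- mean_ln W)%:E.
Proof.
move=> W_supp; rewrite /expect_idens /mean_ln -sumrN -sumEFin big_mkcond /=.
apply: eq_bigr => xy _; case: ifP => [J_gt0 | /negbT/joint_ngt0 ->].
  by rewrite /idens W_supp // -EFinM mulrN.
by rewrite mul0r oppr0.
Qed.

Lemma mean_ln_sub_le_Gfun (W : X -> Y -> R) : is_channel W ->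
  (forall xy, 0 < joint P Q xy -> 0 < W xy.1 xy.2) ->
  ((mean_ln W - mean_ln (fun _ => outdist P Q))%:E <= Gfun P Q W)%E.
Proof.
move=> W_channel W_supp.
rewrite /Gfun entropy_outdist expect_idens_mean_ln // -EFinB.
apply: le_trans (leeDl _ _); first by rewrite lee_fin; lra.
apply: le_ereal_inf_tmp => _ [V [V_channel _] <-].
have [JW_ge0 JW_sum] := joint_is_dist W_channel.
by apply: relent_ge0 (joint_is_dist V_channel) JW_ge0 _; rewrite JW_sum.
Qed.

End JointDistribution.

Section PositivePart.
Variable R : realType.
Local Open Scope ereal_scope.

Lemma posp_ge0 (x : \bar R) : 0 <= posp x.
Proof. by rewrite /posp le_max lexx. Qed.

Lemma posp_sub_le (r i d : R) (g : \bar R) : (0 <= d)%R -> (i - d)%:E <= g ->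
  posp (r%:E - g) <= d%:E + posp (r%:E - i%:E).
Proof.
move=> d_ge0; case: g => [g | _ | //]; rewrite /posp.
  rewrite lee_fin -!EFinB -!EFin_max -EFinD lee_fin => g_ge.
  have max_ge : (0 <= Num.max 0 (r - i) /\ r - i <= Num.max 0 (r - i))%R.
    by rewrite !le_max !lexx orbT.
  by rewrite ge_max; apply/andP; split; lra.
by rewrite /= addeNy max_l ?leNy0 // adde_ge0 // le_max lexx.
Qed.

Lemma halfe_add_le (d : R) (p q : \bar R) : (0 <= d)%R -> 0 <= p ->
  q <= d%:E + p -> (2^-1)%:E * (d%:E + q) <= d%:E + (2^-1)%:E * p.
Proof.
move=> d_ge0; case: p => [p | _ _ | //].
  rewrite lee_fin => p_ge0 q_le.
  apply: (@le_trans _ _ ((2^-1)%:E * (d%:E + (d + p)%:E))).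
    by apply: lee_wpmul2l => //; apply: leeD.
  by rewrite -!EFinD -!EFinM lee_fin; lra.
by rewrite gt0_muley ?lte_fin // addey // leey.
Qed.

End PositivePart.

Section Objectives.
Variables (R : realType) (X Y : finType) (Rt : R) (P : X -> R) (W : X -> Y -> R).
Local Open Scope ereal_scope.

Definition aleph_obj (Q : X -> Y -> R) : \bar R :=
  relent (joint P Q) (joint P W)
  + (2^-1)%:E * posp (Rt%:E - relent (joint P Q) (prodd P (outdist P Q))).

Definition beth_obj (Q : X -> Y -> R) : \bar R :=
  relent (joint P Q) (joint P W) + posp (Rt%:E - Gfun P Q W).

Hypotheses (P_dist : is_dist P) (W_channel : is_channel W).

Lemma half_beth_obj_le_aleph_obj (Q : X -> Y -> R) :
  is_channel Q -> (2^-1)%:E * beth_obj Q <= aleph_obj Q.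
Proof.
move=> Q_channel; rewrite /beth_obj /aleph_obj.
set I := relent (joint P Q) (prodd P (outdist P Q)).
have [JW_ge0 JW_sum] := joint_is_dist P_dist W_channel.
have D_ge0 : 0 <= relent (joint P Q) (joint P W).
  by apply: relent_ge0 (joint_is_dist P_dist Q_channel) JW_ge0 _; rewrite JW_sum.
have [abs_cont | not_abs_cont] :=
  boolP [forall xy, (0 < joint P Q xy)%R ==> (0 < joint P W xy)%R].
  have W_supp xy : (0 < joint P Q xy)%R -> (0 < W xy.1 xy.2)%R.
    move=> J_gt0; have := implyP (forallP abs_cont xy) J_gt0.
    by rewrite /joint pmulr_rgt0 //; case: (joint_gt0 P_dist J_gt0).
  rewrite /I relent_prodd_outdist // (relent_joint P_dist Q_channel W_supp) in D_ge0 *.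
  apply: halfe_add_le; rewrite ?posp_ge0 -?lee_fin //.
  apply: posp_sub_le; first by rewrite -lee_fin.
  apply: le_trans (mean_ln_sub_le_Gfun P_dist Q_channel W_channel W_supp).
  by rewrite lee_fin; lra.
have D_infty : relent (joint P Q) (joint P W) = +oo.
  by rewrite /relent (negbTE not_abs_cont).
have half_ge0 : 0 <= (2^-1)%:E * posp (Rt%:E - I) by rewrite mule_ge0 ?posp_ge0.
apply: le_trans (leey _) _; rewrite D_infty addye //.
by rewrite gt_eqF // (lt_le_trans ltNy0 half_ge0).
Qed.

End Objectives.

Theorem proposition4 (R : realType) (X Y : finType) (m : nat)
  (P : X -> R) (W : X -> Y -> R) (Rt : R) :
  is_mtype m P -> is_channel W ->
  (0 < mutinf P W)%E -> (mutinf P W < Rt%:E)%E ->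
  ((2^-1)%:E * beth Rt P W <= aleph Rt P W)%E.
Proof.
move=> [P_dist _] W_channel _ _.
apply: le_ereal_inf_tmp => _ [Q Q_channel <-].
apply: le_trans (half_beth_obj_le_aleph_obj Rt P_dist W_channel Q_channel).
by apply: lee_wpmul2l => //; apply: ereal_inf_lbound; exists Q.
Qed.
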